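(* Let the reaction network have a stoichiometric matrix $S$ of full rank $M$. Then the network is regular, i.e. $\det(SR)\neq 0$ algebraically, if and only if there exists a child selection $J:\mathcal M\to\mathcal E$ such that $J(\mathcal M)$ selects an $S$-basis, i.e. $\det S^{J(\mathcal M)}\neq 0$ (equivalently, $\ker S$ contains no nonzero vector supported in $J(\mathcal M)$).
   Context: A reaction network consists of a finite set of metabolites $\mathcal M=\{1,\dots,M\}$ and a finite set of reactions $\mathcal E=\{1,\dots,E\}$. Each reaction $j$ has an input stoichiometric vector $y^j\in\mathbb R_{\ge0}^M$ and an output stoichiometric vector $\bar y^j\in\mathbb R_{\ge0}^M$. Write $m\vdash j$ (metabolite $m$ is an input, or ''mother'', of reaction $j$) iff $y^j_m\neq 0$. The stoichiometric matrix $S$ is the real $M\times E$ matrix whose $j$-th column is $S^j=\bar y^j-y^j$. The rate matrix $R=(r_{jm})_{j\in\mathcal E,m\in\mathcal M}$ is the $E\times M$ matrix whose entries $r_{jm}$ with $m\vdash j$ are independent indeterminates, and $r_{jm}=0$ whenever $m\not\vdash j$. A polynomial or rational expression in these indeterminates is ''nonzero algebraically'' if it is not the zero polynomial / zero rational function. For $\mathcal E'\subseteq\mathcal E$, $S^{\mathcal E'}$ denotes the submatrix of $S$ consisting of the columns indexed by $\mathcal E'$; $\mathcal E'$ ''selects an $S$-basis'' if $|\mathcal E'|=M$ and $\det S^{\mathcal E'}\neq0$. A child selection is an injective map $J:\mathcal M\to\mathcal E$ with $m\vdash J(m)$ for every $m\in\mathcal M$. The network is called regular if $\det(SR)\neq0$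 algebraically. *)

From HB Require Import structures.
From mathcomp Require Import all_boot all_order all_algebra.
Set Implicit Arguments. Unset Strict Implicit. Unset Printing Implicit Defensive.
Import Order.TTheory GRing.Theory Num.Theory.
Local Open Scope ring_scope.

(* Multivariate polynomial ring in n indeterminates over R, as iterated
   univariate polynomials: mpoly R n = R[X_0][X_1]...[X_{n-1}]. *)
Fixpoint mpoly (R : idomainType) (n : nat) : idomainType :=
  match n with
  | 0 => R
  | n'.+1 => ({poly mpoly R n'} : idomainType)
  end.

Fixpoint mconst (R : idomainType) (n : nat) (x : R) : mpoly R n :=
  match n return mpoly R n with
  | 0 => x
  | n'.+1 => (mconst n' x)%:P
  end.

(* the k-th indeterminate X_k of mpoly R n (0 if k >= n) *)
Fixpoint mvar (R : idomainType) (n k : nat) : mpoly R n :=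
  match n return mpoly R n with
  | 0 => 0
  | n'.+1 => if k == n' then 'X else (mvar R n' k)%:P
  end.

Section Network.
Variables (R : realFieldType) (M E : nat).

(* y, ybar : columns are the input / output stoichiometric vectors y^j, ybar^j *)
Definition stoich (y ybar : 'M[R]_(M, E)) : 'M[R]_(M, E) := ybar - y.

(* m |- j : metabolite m is an input (mother) of reaction j *)
Definition mother (y : 'M[R]_(M, E)) (m : 'I_M) (j : 'I_E) : bool := y m j != 0.

Definition nvars : nat := #|{: 'I_E * 'I_M}|.

Definition rate_matrix (y : 'M[R]_(M, E)) : 'M[mpoly R nvars]_(E, M) :=
  \matrix_(j < E, m < M)
    (if mother y m j then mvar R nvars (enum_rank (j, m)) else 0).

Definition stoich_poly (y ybar : 'M[R]_(M, E)) : 'M[mpoly R nvars]_(M, E) :=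
  map_mx (@mconst R nvars) (stoich y ybar).

Definition regular (y ybar : 'M[R]_(M, E)) : Prop :=
  \det (stoich_poly y ybar *m rate_matrix y) != 0.

Definition child_selection (y : 'M[R]_(M, E)) (J : 'I_M -> 'I_E) : Prop :=
  injective J /\ forall m, mother y m (J m).

(* J(M) selects an S-basis: det of the columns S^{J(m)} is nonzero
   (|J(M)| = M holds by injectivity) *)
Definition selects_basis (S : 'M[R]_(M, E)) (J : 'I_M -> 'I_E) : Prop :=
  \det (colsub J S) != 0.

End Network.

From HB Require Import structures.
From mathcomp Require Import all_boot all_order all_algebra all_fingroup.
Import Order.TTheory GRing.Theory Num.Theory.
Local Open Scope ring_scope.

(** Expanding both permutation sums, [det (S R)] is the sum over all maps
    [g : M -> E] of [det S^g] times the monomial [prod_m r_(g m, m)].  If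
    [det (S R) <> 0] some term is nonzero: its monomial being nonzero makes [g]
    a child selection, and [det S^g <> 0] forces [g] to be injective.
    Conversely, for a child selection [J], specialising [r_jm] to [1] when
    [j = J m] and to [0] otherwise turns [R] into the column selector of [J],
    so [det (S R)] specialises to [det S^J <> 0]. *)

Fixpoint meval (R : idomainType) (n : nat) (v : nat -> R) :
    {rmorphism mpoly R n -> R} :=
  match n return {rmorphism mpoly R n -> R} with
  | 0 => GRing.RMorphism.clone _ _ idfun _
  | n'.+1 =>
      GRing.RMorphism.clone _ _ (meval R n' v \o horner_eval (mconst n' (v n'))) _
  end.

Lemma meval_const (R : idomainType) n (v : nat -> R) x :
  meval R n v (mconst n x) = x.
Proof. by elim: n => [|n IHn] //=; rewrite /horner_eval hornerC IHn. Qed.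

Lemma meval_var (R : idomainType) n (v : nat -> R) k :
  (k < n)%N -> meval R n v (mvar R n k) = v k.
Proof.
elim: n => [//|n IHn] lt_kn /=; rewrite /horner_eval.
case: eqP => [->|/eqP ne_kn]; first by rewrite hornerX meval_const.
by rewrite hornerC IHn // -ltnS ltn_neqAle ne_kn.
Qed.

Fixpoint mconst_rmorphism (R : idomainType) (n : nat) : {rmorphism R -> mpoly R n} :=
  match n return {rmorphism R -> mpoly R n} with
  | 0 => GRing.RMorphism.clone _ _ idfun _
  | n'.+1 => GRing.RMorphism.clone _ _ (@polyC _ \o mconst_rmorphism R n') _
  end.

Lemma mconst_rmorphismE (R : idomainType) n : mconst_rmorphism R n =1 @mconst R n.
Proof. by elim: n => [|n IHn] x //=; rewrite IHn. Qed.

Lemma det_map_mconst (R : idomainType) n p (A : 'M[R]_p) :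
  \det (map_mx (@mconst R n) A) = mconst n (\det A).
Proof.
rewrite -mconst_rmorphismE -det_map_mx; congr (\det _).
by apply/matrixP => i j; rewrite !mxE mconst_rmorphismE.
Qed.

Lemma sumr_neq0_exists (V : nmodType) (I : finType) (F : I -> V) :
  \sum_i F i != 0 -> exists i, F i != 0.
Proof.
move=> sum_neq0; have [i Fi_neq0 | F0] := pickP (fun i => F i != 0).
  by exists i.
by case/negP: sum_neq0; rewrite big1 // => i _; apply/eqP/negbFE/F0.
Qed.

Lemma det_colsub_neq0_inj (T : comNzRingType) m e (S : 'M[T]_(m, e))
    (g : 'I_m -> 'I_e) :
  \det (colsub g S) != 0 -> injective g.
Proof.
move=> det_neq0 i1 i2 g12; apply/eqP; apply: contraNT det_neq0 => ne_i12.
by rewrite -det_tr; apply/eqP/(determinant_alternate ne_i12) => k; rewrite !mxE g12.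
Qed.

Lemma det_mulmx_colsub_sum (T : comNzRingType) m e
    (S : 'M[T]_(m, e)) (B : 'M[T]_(e, m)) :
  \det (S *m B) =
    \sum_(g : {ffun 'I_m -> 'I_e}) \det (colsub g S) * \prod_k B (g k) k.
Proof.
have expand_sign (s : 'S_m) : \prod_i (S *m B) i (s i) =
    \sum_(g : {ffun 'I_m -> 'I_e}) (\prod_i S i (g (s i))) * \prod_k B (g k) k.
  under eq_bigr do rewrite mxE.
  rewrite bigA_distr_bigA /=.
  pose gs (g : {ffun 'I_m -> 'I_e}) := [ffun i => g (s i)].
  have gs_inj : injective gs.
    move=> g1 g2 /ffunP g12; apply/ffunP => k.
    by have := g12 (s^-1 k)%g; rewrite !ffunE permKV.
  rewrite (reindex_inj gs_inj); apply: eq_bigr => g _.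
  rewrite big_split /=; congr (_ * _); first by apply: eq_bigr => i _; rewrite ffunE.
  by rewrite [RHS](reindex_inj (@perm_inj _ s)); apply: eq_bigr => i _; rewrite ffunE.
rewrite /determinant (eq_bigr _ (fun s _ => congr1 _ (expand_sign s))).
under eq_bigr do rewrite big_distrr.
rewrite exchange_big; apply: eq_bigr => g _ /=; rewrite big_distrl.
apply: eq_bigr => s _; rewrite mulrA; congr (_ * _ * _).
by apply: eq_bigr => i _; rewrite mxE.
Qed.

Section RateMatrix.
Variables (R : realFieldType) (M E : nat) (y : 'M[R]_(M, E)).

Lemma rate_matrix_neq0_mother j m : rate_matrix y j m != 0 -> mother y m j.
Proof. by rewrite mxE; case: (mother y m j); rewrite ?eqxx. Qed.

Definition selection_point (J : 'I_M -> 'I_E) : nat -> R :=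
  fun k => [exists m, k == enum_rank (J m, m) :> nat]%:R.

Lemma selection_point_rank J j m :
  selection_point J (enum_rank (j, m)) = (j == J m)%:R.
Proof.
rewrite /selection_point.
case: existsP => [[m' /eqP/val_inj/enum_rank_inj [-> ->]]|no_m]; first by rewrite eqxx.
by case: eqP => // j_eq; case: no_m; exists m; rewrite j_eq.
Qed.

Lemma meval_rate_matrix_selection J : (forall m, mother y m (J m)) ->
  map_mx (meval R (nvars M E) (selection_point J)) (rate_matrix y) = colsub J 1%:M.
Proof.
move=> J_mother; apply/matrixP => j m; rewrite !mxE.
case: ifP => [_|not_mother]; first by rewrite meval_var // selection_point_rank.
by rewrite rmorph0; case: eqP not_mother => // ->; rewrite J_mother.
Qed.

End RateMatrix.

Arguments selection_point {R M E} J k.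

Theorem theorem2p1 (R : realFieldType) (M E : nat) (y ybar : 'M[R]_(M, E))
  (hy : forall m j, 0 <= y m j) (hybar : forall m j, 0 <= ybar m j)
  (hrank : \rank (stoich y ybar) = M) :
  regular y ybar <->
  exists J : 'I_M -> 'I_E, child_selection y J /\ selects_basis (stoich y ybar) J.
Proof.
rewrite /regular /selects_basis; split.
- rewrite det_mulmx_colsub_sum => /sumr_neq0_exists [g].
  rewrite mulf_eq0 negb_or => /andP [det_neq0 /prodf_neq0 rate_neq0].
  have detS_neq0 : \det (colsub g (stoich y ybar)) != 0.
    apply: contraNneq det_neq0 => detS0.
    by rewrite /stoich_poly -map_mxsub det_map_mconst detS0 -mconst_rmorphismE rmorph0.
  exists g; split=> //; split; first exact: det_colsub_neq0_inj detS_neq0.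
  by move=> m; apply: rate_matrix_neq0_mother; apply: rate_neq0.
- case=> J [[_ J_mother] detSJ_neq0]; apply: contraNneq detSJ_neq0 => det0.
  have := congr1 (meval R (nvars M E) (selection_point J)) det0.
  rewrite rmorph0 -det_map_mx map_mxM meval_rate_matrix_selection //.
  have -> : map_mx (meval R _ (selection_point J)) (stoich_poly y ybar) = stoich y ybar.
    by apply/matrixP => i j; rewrite !mxE meval_const.
  by rewrite mulmx_colsub mulmx1 => ->.
Qed.
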